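(* For $q\in(0,1)$, let $(X_q,d_q)$ be the compact metric space with $X_q=\{0\}\cup\{q^{2k}:k\in\mathbb N_0\}$ and $d_q$ as defined in the context. Then the map $q\mapsto (X_q,d_q)$ from $(0,1)$ to compact metric spaces is continuous with respect to the Gromov–Hausdorff distance, and $(X_q,d_q)$ converges in Gromov–Hausdorff distance to the interval $[-\pi/2,\pi/2]$ with its standard Euclidean metric as $q\to 1^-$.
   Context: For $q\in(0,1)$ define $\rho_q:[-1,\infty)\to\mathbb R$ by $\rho_q(x)=\dfrac{\sqrt{1-q^{2(x+1)}}}{(1-q^2)q^x}$, and define $d_q:X_q\times X_q\to[0,\infty)$ by $d_q(x,x)=0$; $d_q(q^{2n},q^{2m})=\sum_{k=\min\{m,n\}}^{\max\{m,n\}-1}1/\rho_q(k)$ for $n\ne m$; and $d_q(q^{2n},0)=d_q(0,q^{2n})=\sum_{k=n}^\infty 1/\rho_q(k)$. The Gromov–Hausdorff distance between compact metric spaces $X,Y$ is the infimum of Hausdorff distances between isometric images of $X$ and $Y$ in a common metric space $Z$, over all such $Z$ and isometric embeddings. *)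

From Stdlib Require Import Reals List.
From Coquelicot Require Import Coquelicot.
Import ListNotations.
Open Scope R_scope.

Definition rho (q x : R) : R :=
  sqrt (1 - Rpower q (2 * (x + 1))) / ((1 - q ^ 2) * Rpower q x).

(* Points of X_q: [Some n] stands for q^(2n), [None] stands for 0.
   For q in (0,1) this is a bijection onto X_q = {0} ∪ {q^(2k) : k ∈ N0}. *)
Definition Xpt := option nat.

Definition fsum (f : nat -> R) (m M : nat) : R :=
  fold_right Rplus 0 (map f (seq m (M - m))).

Definition inv_rho (q : R) (k : nat) : R := 1 / rho q (INR k).

Definition dq (q : R) (x y : Xpt) : R :=
  match x, y with
  | None, None => 0
  | Some n, Some m =>
      if Nat.eqb n m then 0
      else fsum (inv_rho q) (Nat.min m n) (Nat.max m n)
  | Some n, None | None, Some n => Series (fun k => inv_rho q (n + k))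
  end.

Definition Ipt := { x : R | - (PI / 2) <= x <= PI / 2 }.
Definition dI (x y : Ipt) : R := Rabs (proj1_sig x - proj1_sig y).

Definition is_metric {Z : Type} (d : Z -> Z -> R) : Prop :=
  (forall x y, d x y = 0 <-> x = y) /\
  (forall x y, d x y = d y x) /\
  (forall x y z, d x z <= d x y + d y z).

Definition isometric_embedding {X Z : Type} (dX : X -> X -> R)
    (dZ : Z -> Z -> R) (f : X -> Z) : Prop :=
  forall x y, dZ (f x) (f y) = dX x y.

(* Hausdorff distance between f(X) and g(Y) in (Z,dZ) is < eps, unfolded:
   d_H = max(sup_x inf_y, sup_y inf_x) < eps  iff  there is r < eps with
   every point of each image within distance < r of the other image. *)
Definition hausdorff_lt {X Y Z : Type} (dZ : Z -> Z -> R)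
    (f : X -> Z) (g : Y -> Z) (eps : R) : Prop :=
  exists r, r < eps /\
    (forall x, exists y, dZ (f x) (g y) < r) /\
    (forall y, exists x, dZ (f x) (g y) < r).

(* Gromov–Hausdorff distance (infimum over all Z and isometric embeddings of
   Hausdorff distances) is < eps, unfolded. *)
Definition GH_lt {X Y : Type} (dX : X -> X -> R) (dY : Y -> Y -> R)
    (eps : R) : Prop :=
  exists (Z : Type) (dZ : Z -> Z -> R) (f : X -> Z) (g : Y -> Z),
    is_metric dZ /\ isometric_embedding dX dZ f /\
    isometric_embedding dY dZ g /\ hausdorff_lt dZ f g eps.

From Stdlib Require Import Reals Lra Lia.
From Coquelicot Require Import Coquelicot.
Open Scope R_scope.

(** The space X_q is a subset of the real line in disguise.  Writing
    [gap q k = 1/rho_q(k)] and [tail q n = sum_{k>=n} gap q k], the map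
    [q^{2n} |-> tail q n], [0 |-> 0] is an isometry of (X_q, d_q) into R
    ([coord_isometry]); so every Gromov-Hausdorff estimate below is obtained by
    comparing subsets of R ([GH_lt_via_line]).

    - Continuity: for q near q0, finitely many gaps are close (each gap is a
      smooth function of q) and the remaining tails are uniformly small
      (geometric domination), so [|tail q n - tail q0 n|] is uniformly small
      and matching [q^{2n}] with [q0^{2n}] does the job.
    - Limit q -> 1: every gap is at most [sqrt(1-q^2)], and comparing the gaps
      with differences of [(1+q) asin(q^k)] (mean value theorem) squeezes the
      total length [tail q 0] between [(1+q) asin q] and
      [(1+q) asin q + sqrt(1-q^2)], which tend to [pi].  A [sqrt(1-q^2)]-dense
      subset of [[0, tail q 0]] is then close to [[0, pi]], the image of
      [[-pi/2, pi/2]] under translation. *)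

(** * The gaps of X_q *)

(* [gap q k = 1/rho_q(k) = d_q(q^{2k}, q^{2k+2})], written with integer powers. *)
Definition gap (q : R) (k : nat) : R :=
  (1 - q ^ 2) * q ^ k / sqrt (1 - q ^ (2 * k + 2)).

Lemma pow_unit_interval q n : 0 < q < 1 -> 0 < q ^ n <= 1.
Proof.
  intros Hq. induction n as [|n IH]; simpl; [lra|].
  split; [apply Rmult_lt_0_compat|]; nra.
Qed.

Lemma pow_2k2_le q k : 0 < q < 1 -> q ^ (2 * k + 2) <= q ^ 2.
Proof.
  intros Hq. replace (2 * k + 2)%nat with (2 + 2 * k)%nat by lia.
  rewrite pow_add. pose proof (pow_unit_interval q (2 * k) Hq).
  pose proof (pow_unit_interval q 2 Hq). nra.
Qed.

Lemma gap_denominator_pos q k : 0 < q < 1 -> 0 < sqrt (1 - q ^ (2 * k + 2)).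
Proof.
  intros Hq. apply sqrt_lt_R0. pose proof (pow_2k2_le q k Hq). simpl in *. nra.
Qed.

Lemma inv_rho_gap q k : 0 < q < 1 -> inv_rho q k = gap q k.
Proof.
  intros Hq. unfold inv_rho, rho, gap.
  replace (2 * (INR k + 1)) with (INR (2 * k + 2))
    by (rewrite plus_INR, mult_INR; simpl; lra).
  rewrite !Rpower_pow by lra.
  pose proof (gap_denominator_pos q k Hq). pose proof (pow_unit_interval q k Hq).
  assert (0 < 1 - q ^ 2) by (simpl; nra).
  field. lra.
Qed.

Lemma gap_pos q k : 0 < q < 1 -> 0 < gap q k.
Proof.
  intros Hq. unfold gap. pose proof (gap_denominator_pos q k Hq).
  pose proof (pow_unit_interval q k Hq). assert (0 < 1 - q ^ 2) by (simpl; nra).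
  apply Rdiv_lt_0_compat; nra.
Qed.

(* The key size estimate: [gap q k <= sqrt(1-q^2) q^k]; the factor
   [sqrt(1-q^2)] makes all gaps small as [q -> 1]. *)
Lemma gap_le q k : 0 < q < 1 -> gap q k <= sqrt (1 - q ^ 2) * q ^ k.
Proof.
  intros Hq. unfold gap. set (s := sqrt (1 - q ^ 2)).
  pose proof (pow_unit_interval q k Hq).
  assert (Hs : 0 < s) by (apply sqrt_lt_R0; simpl; nra).
  assert (Hss : s * s = 1 - q ^ 2) by (apply sqrt_sqrt; simpl; nra).
  assert (Hsd : s <= sqrt (1 - q ^ (2 * k + 2)))
    by (apply sqrt_le_1_alt; pose proof (pow_2k2_le q k Hq); lra).
  rewrite <- Hss. unfold Rdiv.
  replace (s * s * q ^ k * / sqrt (1 - q ^ (2 * k + 2)))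
    with (s * q ^ k * (s * / sqrt (1 - q ^ (2 * k + 2)))) by ring.
  rewrite <- (Rmult_1_r (s * q ^ k)) at 2.
  apply Rmult_le_compat_l; [nra|].
  apply Rle_div_l; lra.
Qed.

Lemma gap_le_pow q k : 0 < q < 1 -> gap q k <= q ^ k.
Proof.
  intros Hq. eapply Rle_trans; [apply gap_le; exact Hq|].
  assert (sqrt (1 - q ^ 2) <= 1).
  { rewrite <- sqrt_1 at 2. apply sqrt_le_1_alt. pose proof (pow_unit_interval q 2 Hq). lra. }
  pose proof (pow_unit_interval q k Hq). pose proof (sqrt_pos (1 - q ^ 2)). nra.
Qed.

(** * Tail sums: the coordinate of [q^{2n}] measured from the point 0 *)

Lemma ex_series_gap_tail q n : 0 < q < 1 -> ex_series (fun k => gap q (n + k)).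
Proof.
  intros Hq.
  apply (@ex_series_le R_AbsRing R_CompleteNormedModule _ (fun k => q ^ n * q ^ k)).
  - intros k. rewrite <- pow_add, Rabs_pos_eq by (left; apply gap_pos; exact Hq).
    apply gap_le_pow; exact Hq.
  - apply (ex_series_scal_l (q ^ n) (fun k => q ^ k)).
    apply ex_series_geom. rewrite Rabs_pos_eq; lra.
Qed.

(* [tail q n = d_q(q^{2n}, 0) = sum_{k >= n} gap q k]. *)
Definition tail (q : R) (n : nat) : R := Series (fun k => gap q (n + k)).

Lemma tail_succ q n : 0 < q < 1 -> tail q n = gap q n + tail q (S n).
Proof.
  intros Hq. unfold tail. rewrite Series_incr_1 by (apply ex_series_gap_tail; exact Hq).
  rewrite Nat.add_0_r. f_equal. apply Series_ext. intros k. f_equal. lia.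
Qed.

Lemma tail_bounds q n : 0 < q < 1 -> 0 <= tail q n <= q ^ n / (1 - q).
Proof.
  intros Hq. unfold tail. split.
  - assert (Hzero : Series (fun _ => 0) = 0).
    { transitivity (Series (fun _ => 0 * 1)); [apply Series_ext; intros; ring|].
      rewrite Series_scal_l. ring. }
    rewrite <- Hzero. apply Series_le.
    + intros k. split; [lra|]. left; apply gap_pos; exact Hq.
    + apply ex_series_gap_tail; exact Hq.
  - assert (Hgeom : is_series (fun k => q ^ n * q ^ k) (q ^ n / (1 - q))).
    { apply (is_series_scal_l (q ^ n) (fun k => q ^ k)). apply is_series_geom.
      rewrite Rabs_pos_eq; lra. }
    rewrite <- (is_series_unique _ _ Hgeom). apply Series_le.
    + intros k. rewrite <- pow_add. split; [left; apply gap_pos|apply gap_le_pow]; exact Hq.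
    + eexists; exact Hgeom.
Qed.

Lemma tail_small q eta : 0 < q < 1 -> 0 < eta -> exists N, tail q N < eta.
Proof.
  intros Hq Heta.
  assert (Hy : 0 < eta * (1 - q)) by (apply Rmult_lt_0_compat; lra).
  destruct (pow_lt_1_zero q ltac:(rewrite Rabs_pos_eq; lra) _ Hy) as [N HN].
  exists N. pose proof (HN N (le_n N)) as HqN.
  rewrite Rabs_pos_eq in HqN by (left; apply pow_lt; lra).
  pose proof (tail_bounds q N Hq).
  assert (q ^ N / (1 - q) < eta) by (apply Rlt_div_l; lra). lra.
Qed.

Lemma tail_block_le q n h : 0 < q < 1 ->
  (forall k, (n <= k)%nat -> gap q k <= h k - h (S k)) ->
  forall m, tail q n - tail q (n + m)%nat <= h n - h (n + m)%nat.
Proof.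
  intros Hq Hh m. induction m as [|m IH].
  - rewrite Nat.add_0_r. lra.
  - rewrite (tail_succ q (n + m)) in IH by exact Hq.
    pose proof (Hh (n + m)%nat ltac:(lia)).
    replace (n + S m)%nat with (S (n + m)) by lia. lra.
Qed.

Lemma tail_block_ge q n h : 0 < q < 1 ->
  (forall k, (n <= k)%nat -> h k - h (S k) <= gap q k) ->
  forall m, h n - h (n + m)%nat <= tail q n - tail q (n + m)%nat.
Proof.
  intros Hq Hh m. induction m as [|m IH].
  - rewrite Nat.add_0_r. lra.
  - rewrite (tail_succ q (n + m)) in IH by exact Hq.
    pose proof (Hh (n + m)%nat ltac:(lia)).
    replace (n + S m)%nat with (S (n + m)) by lia. lra.
Qed.

Lemma tail_decreasing q n m : 0 < q < 1 -> (n <= m)%nat -> tail q m <= tail q n.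
Proof.
  intros Hq Hnm.
  pose proof (tail_block_ge q n (fun _ => 0) Hq
                ltac:(intros; left; rewrite Rminus_0_r; apply gap_pos; exact Hq) (m - n))
    as Hblock.
  replace (n + (m - n))%nat with m in Hblock by lia. lra.
Qed.

Lemma tail_block_close q q0 n c : 0 < q < 1 -> 0 < q0 < 1 ->
  forall m, (forall k, (n <= k < n + m)%nat -> Rabs (gap q k - gap q0 k) <= c) ->
  Rabs ((tail q n - tail q (n + m)%nat) - (tail q0 n - tail q0 (n + m)%nat)) <= INR m * c.
Proof.
  intros Hq Hq0 m. induction m as [|m IH]; intros Hc.
  - rewrite Nat.add_0_r. simpl. replace (_ - _) with 0 by ring. rewrite Rabs_R0. lra.
  - replace (n + S m)%nat with (S (n + m)) by lia.
    rewrite (tail_succ q (n + m)), (tail_succ q0 (n + m)) in IH by assumption.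
    specialize (IH ltac:(intros; apply Hc; lia)).
    pose proof (Hc (n + m)%nat ltac:(lia)) as Hlast.
    rewrite S_INR, Rmult_plus_distr_r, Rmult_1_l.
    eapply Rle_trans; [|apply Rplus_le_compat; [exact IH|exact Hlast]].
    eapply Rle_trans; [|apply Rabs_triang]. right. f_equal. ring.
Qed.

(** * X_q is isometric to a subset of the real line *)

Lemma fsum_inv_rho q n m : 0 < q < 1 -> (n <= m)%nat ->
  fsum (inv_rho q) n m = tail q n - tail q m.
Proof.
  intros Hq Hnm. replace m with (n + (m - n))%nat by lia.
  generalize (m - n)%nat as len. clear m Hnm. intros len. revert n.
  induction len as [|len IH]; intros n.
  - unfold fsum. rewrite Nat.add_0_r, Nat.sub_diag. simpl. ring.
  - specialize (IH (S n)). unfold fsum in *.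
    replace (n + S len - n)%nat with (S len) by lia.
    replace (S n + len - S n)%nat with len in IH by lia.
    simpl. rewrite IH, inv_rho_gap, (tail_succ q n) by exact Hq.
    replace (S n + len)%nat with (n + S len)%nat by lia. ring.
Qed.

Lemma series_inv_rho q n : 0 < q < 1 ->
  Series (fun k => inv_rho q (n + k)) = tail q n.
Proof.
  intros Hq. apply Series_ext. intros k. apply inv_rho_gap. exact Hq.
Qed.

Definition coord (q : R) (x : Xpt) : R :=
  match x with Some n => tail q n | None => 0 end.

Definition dR (x y : R) : R := Rabs (x - y).

Lemma dR_metric : is_metric dR.
Proof.
  unfold dR. split; [|split].
  - intros x y. split; intros H.
    + destruct (Rcase_abs (x - y)) as [Hneg|Hpos];
        [rewrite Rabs_left in H|rewrite Rabs_right in H]; lra.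
    + subst. unfold Rminus. rewrite Rplus_opp_r, Rabs_R0. reflexivity.
  - intros x y. apply Rabs_minus_sym.
  - intros x y z. replace (x - z) with ((x - y) + (y - z)) by ring. apply Rabs_triang.
Qed.

Lemma coord_isometry q : 0 < q < 1 -> isometric_embedding (dq q) dR (coord q).
Proof.
  intros Hq [n|] [m|]; unfold dR, coord, dq.
  - destruct (Nat.eqb_spec n m) as [<-|Hnm].
    + unfold Rminus. rewrite Rplus_opp_r. apply Rabs_R0.
    + destruct (Nat.lt_ge_cases n m).
      * rewrite Nat.min_r, Nat.max_l, fsum_inv_rho by (lia || exact Hq).
        pose proof (tail_decreasing q n m Hq ltac:(lia)).
        rewrite Rabs_pos_eq; lra.
      * rewrite Nat.min_l, Nat.max_r, fsum_inv_rho by (lia || exact Hq).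
        pose proof (tail_decreasing q m n Hq ltac:(lia)).
        rewrite Rabs_left1; lra.
  - rewrite Rminus_0_r, series_inv_rho by exact Hq.
    apply Rabs_pos_eq, tail_bounds, Hq.
  - rewrite Rminus_0_l, Rabs_Ropp, series_inv_rho by exact Hq.
    apply Rabs_pos_eq, tail_bounds, Hq.
  - unfold Rminus. rewrite Rplus_opp_r. apply Rabs_R0.
Qed.

Lemma GH_lt_via_line {X Y : Type} (dX : X -> X -> R) (dY : Y -> Y -> R)
    (f : X -> R) (g : Y -> R) (eps r : R) :
  isometric_embedding dX dR f -> isometric_embedding dY dR g -> r < eps ->
  (forall x, exists y, dR (f x) (g y) < r) ->
  (forall y, exists x, dR (f x) (g y) < r) ->
  GH_lt dX dY eps.
Proof.
  intros Hf Hg Hr Hxy Hyx. exists R, dR, f, g.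
  split; [exact dR_metric|]. split; [exact Hf|]. split; [exact Hg|].
  exists r. auto.
Qed.

(** * Continuity in q *)

Lemma gap_continuous k q0 : 0 < q0 < 1 -> forall eps : posreal,
  exists delta : posreal, forall q, Rabs (q - q0) < delta ->
    Rabs (gap q k - gap q0 k) < eps.
Proof.
  intros Hq0 eps.
  assert (Hden : 0 < 1 - q0 ^ (2 * k + 2)) by (pose proof (pow_2k2_le q0 k Hq0); simpl in *; nra).
  assert (Hc : continuous (fun q => gap q k) q0).
  { apply (@ex_derive_continuous R_AbsRing R_NormedModule). unfold gap. auto_derive.
    replace (k + (k + 0) + 2)%nat with (2 * k + 2)%nat by lia.
    split; [lra|]. split; [|exact I]. apply Rgt_not_eq, sqrt_lt_R0. exact Hden. }
  destruct (proj1 (filterlim_locally _ _) Hc eps) as [delta Hdelta].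
  exists delta. intros q Hq. apply (Hdelta q). exact Hq.
Qed.

Lemma gaps_continuous q0 : 0 < q0 < 1 -> forall N (c : posreal),
  exists delta : posreal, forall q, Rabs (q - q0) < delta ->
    forall k, (k < N)%nat -> Rabs (gap q k - gap q0 k) < c.
Proof.
  intros Hq0 N c. induction N as [|N [d1 Hd1]].
  - exists (mkposreal 1 Rlt_0_1). intros. lia.
  - destruct (gap_continuous N q0 Hq0 c) as [d2 Hd2].
    assert (Hd : 0 < Rmin d1 d2) by (apply Rmin_pos; apply cond_pos).
    exists (mkposreal _ Hd). simpl. intros q Hq k Hk.
    pose proof (Rmin_l d1 d2). pose proof (Rmin_r d1 d2).
    destruct (Nat.eq_dec k N) as [->|HkN].
    + apply Hd2. lra.
    + apply Hd1; [lra|lia].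
Qed.

Lemma tail_le_uniform q q1 M : 0 < q <= q1 -> q1 < 1 ->
  tail q M <= q1 ^ M / (1 - q1).
Proof.
  intros Hq Hq1. pose proof (tail_bounds q M ltac:(lra)) as [_ Hb].
  eapply Rle_trans; [exact Hb|]. unfold Rdiv.
  apply Rmult_le_compat; [left; apply pow_lt; lra|left; apply Rinv_0_lt_compat; lra| |].
  - apply pow_incr. lra.
  - apply Rinv_le_contravar; lra.
Qed.

(* The coordinates [tail q n] depend continuously on [q], uniformly in [n]:
   finitely many gaps are continuous and the remaining tails are uniformly small. *)
Lemma tails_uniformly_continuous q0 : 0 < q0 < 1 -> forall eps, 0 < eps ->
  exists delta, 0 < delta /\ forall q, 0 < q < 1 -> Rabs (q - q0) < delta ->
    forall n, Rabs (tail q n - tail q0 n) < eps.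
Proof.
  intros Hq0 eps Heps.
  set (q1 := (1 + q0) / 2).
  assert (Hy : 0 < eps * (1 - q1) / 8) by (unfold q1; apply Rdiv_lt_0_compat; nra).
  destruct (pow_lt_1_zero q1 ltac:(rewrite Rabs_pos_eq; unfold q1; lra) _ Hy) as [N HN].
  assert (Hsmall : forall q M, 0 < q <= q1 -> (N <= M)%nat -> tail q M < eps / 8).
  { intros q M Hq HM. pose proof (tail_le_uniform q q1 M Hq ltac:(unfold q1; lra)).
    pose proof (HN M HM) as HqM. rewrite Rabs_pos_eq in HqM by (left; apply pow_lt; unfold q1; lra).
    assert (q1 ^ M / (1 - q1) < eps / 8) by (apply Rlt_div_l; unfold q1 in *; lra). lra. }
  assert (Hc : 0 < eps / (8 * (INR N + 1))) by (pose proof (pos_INR N); apply Rdiv_lt_0_compat; lra).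
  destruct (gaps_continuous q0 Hq0 N (mkposreal _ Hc)) as [d Hd]. simpl in Hd.
  exists (Rmin d ((1 - q0) / 2)). split; [apply Rmin_pos; [apply cond_pos|lra]|].
  intros q Hq Hqq0 n.
  pose proof (Rmin_l d ((1 - q0) / 2)). pose proof (Rmin_r d ((1 - q0) / 2)).
  assert (Hqq1 : q <= q1) by (apply Rabs_def2 in Hqq0; unfold q1; lra).
  set (m := (Nat.max n N - n)%nat).
  assert (Hblock := tail_block_close q q0 n _ Hq Hq0 m
    ltac:(intros k Hk; left; apply Hd; [lra|lia])).
  assert (Hm : INR m * (eps / (8 * (INR N + 1))) <= eps / 8).
  { assert (INR m <= INR N + 1) by (apply Rle_trans with (INR N); [apply le_INR; lia|lra]).
    replace (eps / 8) with ((INR N + 1) * (eps / (8 * (INR N + 1))))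
      by (field; pose proof (pos_INR N); lra).
    apply Rmult_le_compat_r; lra. }
  pose proof (Hsmall q (n + m)%nat ltac:(lra) ltac:(lia)).
  pose proof (Hsmall q0 (n + m)%nat ltac:(unfold q1; lra) ltac:(lia)).
  pose proof (tail_bounds q (n + m) Hq). pose proof (tail_bounds q0 (n + m) Hq0).
  apply Rabs_def1; unfold Rabs in Hblock; destruct (Rcase_abs _) in Hblock; lra.
Qed.

Lemma GH_continuity q0 : 0 < q0 < 1 -> forall eps, 0 < eps ->
  exists delta, 0 < delta /\ forall q, 0 < q < 1 -> Rabs (q - q0) < delta ->
    GH_lt (dq q) (dq q0) eps.
Proof.
  intros Hq0 eps Heps.
  destruct (tails_uniformly_continuous q0 Hq0 (eps / 2) ltac:(lra)) as [delta [Hdelta Hclose]].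
  exists delta. split; [exact Hdelta|]. intros q Hq Hqq0.
  assert (Hmatch : forall x, dR (coord q x) (coord q0 x) < eps / 2).
  { intros [n|]; unfold dR, coord; [apply Hclose; assumption|].
    rewrite Rminus_0_r, Rabs_R0. lra. }
  apply (GH_lt_via_line _ _ (coord q) (coord q0) eps (eps / 2));
    try apply coord_isometry; try assumption; try lra;
    intros x; exists x; apply Hmatch.
Qed.

(** * Arcsine estimates *)

(* Mean value theorem for [asin], whose derivative [1/sqrt(1-x^2)] increases on [0,1). *)
Lemma asin_mvt x y : 0 <= x < y -> y < 1 ->
  (y - x) / sqrt (1 - x ^ 2) <= asin y - asin x <= (y - x) / sqrt (1 - y ^ 2).
Proof.
  intros Hx Hy.
  destruct (MVT_cor2 asin (fun c => 1 / sqrt (1 - c ^ 2)) x y) as [c [Hc1 Hc2]].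
  - lra.
  - intros c Hc. assert (Hr : -1 < c < 1) by lra.
    apply (derive_pt_eq_1 _ _ _ (derivable_pt_asin c Hr)).
    rewrite derive_pt_asin, Rsqr_pow2. reflexivity.
  - rewrite Hc1.
    assert (0 < 1 - y ^ 2) by nra. assert (0 < 1 - c ^ 2) by nra.
    assert (sqrt (1 - y ^ 2) <= sqrt (1 - c ^ 2)) by (apply sqrt_le_1_alt; nra).
    assert (sqrt (1 - c ^ 2) <= sqrt (1 - x ^ 2)) by (apply sqrt_le_1_alt; nra).
    assert (0 < sqrt (1 - y ^ 2)) by (apply sqrt_lt_R0; lra).
    split; unfold Rdiv; rewrite (Rmult_comm (y - x)); apply Rmult_le_compat_r; try lra;
      rewrite Rmult_1_l; apply Rinv_le_contravar; lra.
Qed.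

Lemma asin_le_mono x y : 0 <= x <= y -> y < 1 -> asin x <= asin y.
Proof.
  intros Hxy Hy. destruct (Req_dec x y) as [->|Hne]; [lra|].
  pose proof (asin_mvt x y ltac:(lra) Hy) as [Hlow _].
  assert (0 < sqrt (1 - x ^ 2)) by (apply sqrt_lt_R0; nra).
  assert (0 < (y - x) / sqrt (1 - x ^ 2)) by (apply Rdiv_lt_0_compat; lra).
  lra.
Qed.

Lemma asin_nonneg x : 0 <= x < 1 -> 0 <= asin x.
Proof. intros Hx. rewrite <- asin_0. apply asin_le_mono; lra. Qed.

Lemma asin_le_twice x : 0 <= x <= 1 / 2 -> asin x <= 2 * x.
Proof.
  intros Hx. destruct (Req_dec x 0) as [->|Hx0]; [rewrite asin_0; lra|].
  pose proof (asin_mvt 0 x ltac:(lra) ltac:(lra)) as [_ Hup]. rewrite asin_0 in Hup.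
  assert (1 / 2 <= sqrt (1 - x ^ 2)).
  { rewrite <- (sqrt_pow2 (1 / 2)) by lra. apply sqrt_le_1_alt. nra. }
  assert ((x - 0) / sqrt (1 - x ^ 2) <= 2 * x) by (apply Rle_div_l; nra).
  lra.
Qed.

(* Near 1, [asin q] is close to [pi/2]: [asin (cos th) = pi/2 - th]. *)
Lemma asin_near_one th q : 0 < th <= 1 -> cos th <= q < 1 -> PI / 2 - th <= asin q.
Proof.
  intros Hth Hq. pose proof PI2_3_2.
  assert (Hcos : asin (cos th) = PI / 2 - th) by (rewrite <- sin_shift; apply asin_sin; lra).
  assert (0 < cos th) by (apply cos_gt_0; lra).
  rewrite <- Hcos. apply asin_le_mono; lra.
Qed.

(** * The total length of X_q *)

(* [arc q k = (1+q) asin(q^k)]: the gaps are Riemann-sum approximants of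
   [(1+q) d(asin x)] at the nodes [x = q^k], squeezed between consecutive
   differences of [arc]. *)
Definition arc (q : R) (k : nat) : R := (1 + q) * asin (q ^ k).

Lemma pow_S_lt q k : 0 < q < 1 -> 0 < q ^ S k < q ^ k.
Proof.
  intros Hq. pose proof (pow_unit_interval q k Hq). simpl. split; nra.
Qed.

Lemma pow_2k2_square q k : q ^ (2 * k + 2) = (q ^ S k) ^ 2.
Proof. rewrite <- pow_mult. f_equal. lia. Qed.

(* Upper comparison (for [k >= 1], so that [q^k < 1]): by the mean value
   theorem on [[q^{k+1}, q^k]], with the derivative taken at the left end. *)
Lemma gap_le_arc q k : 0 < q < 1 -> (1 <= k)%nat -> gap q k <= arc q k - arc q (S k).
Proof.
  intros Hq Hk. destruct k as [|k]; [lia|].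
  pose proof (pow_S_lt q k Hq). pose proof (pow_S_lt q (S k) Hq).
  assert (q ^ S k < 1) by (pose proof (pow_unit_interval q k Hq); simpl in *; nra).
  pose proof (asin_mvt (q ^ S (S k)) (q ^ S k) ltac:(lra) ltac:(lra)) as [Hm _].
  unfold gap, arc. rewrite pow_2k2_square.
  assert (0 < sqrt (1 - (q ^ S (S k)) ^ 2)) by (apply sqrt_lt_R0; nra).
  replace ((1 - q ^ 2) * q ^ S k) with ((1 + q) * (q ^ S k - q ^ S (S k))) by (simpl; ring).
  unfold Rdiv in *. rewrite Rmult_assoc, <- Rmult_minus_distr_l.
  apply Rmult_le_compat_l; lra.
Qed.

(* Lower comparison: the mean value theorem on [[q^{k+2}, q^{k+1}]], with
   the derivative taken at the right end. *)
Lemma arc_le_gap q k : 0 < q < 1 -> arc q (S k) - arc q (S (S k)) <= gap q k.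
Proof.
  intros Hq. pose proof (pow_S_lt q k Hq). pose proof (pow_S_lt q (S k) Hq).
  pose proof (pow_unit_interval q k Hq).
  pose proof (asin_mvt (q ^ S (S k)) (q ^ S k) ltac:(lra) ltac:(lra)) as [_ Hm].
  unfold gap, arc. rewrite pow_2k2_square, <- Rmult_minus_distr_l.
  assert (0 < sqrt (1 - (q ^ S k) ^ 2)) by (apply sqrt_lt_R0; nra).
  apply Rle_trans with ((1 + q) * ((q ^ S k - q ^ S (S k)) / sqrt (1 - (q ^ S k) ^ 2))).
  { apply Rmult_le_compat_l; lra. }
  unfold Rdiv. rewrite <- Rmult_assoc. apply Rmult_le_compat_r; [left; apply Rinv_0_lt_compat; lra|].
  (* (1+q)(q^{k+1} - q^{k+2}) = q (1-q^2) q^k <= (1-q^2) q^k *)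
  simpl. assert (0 <= (1 - q * (q * 1)) * q ^ k) by (apply Rmult_le_pos; nra). nra.
Qed.

(* A tail dominated gap-by-gap by the differences of a nonnegative [h] is at
   most [h n]; letting the block length grow uses that tails tend to 0. *)
Lemma tail_le_telescope q n h : 0 < q < 1 ->
  (forall k, (n <= k)%nat -> gap q k <= h k - h (S k)) ->
  (forall k, (n <= k)%nat -> 0 <= h k) ->
  tail q n <= h n.
Proof.
  intros Hq Hgap Hh. apply Rle_plus_epsilon. intros eta Heta.
  destruct (tail_small q eta Hq Heta) as [N HN].
  pose proof (tail_block_le q n h Hq Hgap N).
  pose proof (tail_decreasing q N (n + N) Hq ltac:(lia)).
  pose proof (Hh (n + N)%nat ltac:(lia)). lra.
Qed.

Lemma tail_ge_telescope q n h : 0 < q < 1 ->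
  (forall k, (n <= k)%nat -> h k - h (S k) <= gap q k) ->
  (forall eta, 0 < eta -> exists m, h (n + m)%nat <= eta) ->
  h n <= tail q n.
Proof.
  intros Hq Hgap Hh. apply Rle_plus_epsilon. intros eta Heta.
  destruct (Hh eta Heta) as [m Hm].
  pose proof (tail_block_ge q n h Hq Hgap m).
  pose proof (tail_bounds q (n + m) Hq). lra.
Qed.

Lemma length_bounds q : 0 < q < 1 ->
  (1 + q) * asin q <= tail q 0 <= (1 + q) * asin q + sqrt (1 - q ^ 2).
Proof.
  intros Hq. split.
  - replace ((1 + q) * asin q) with (arc q 1) by (unfold arc; rewrite pow_1; reflexivity).
    apply (tail_ge_telescope q 0 (fun k => arc q (S k)) Hq).
    { intros k _. apply arc_le_gap. exact Hq. }
    intros eta Heta.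
    assert (Hy : 0 < Rmin (eta / 4) (1 / 2)) by (apply Rmin_pos; lra).
    destruct (pow_lt_1_zero q ltac:(rewrite Rabs_pos_eq; lra) _ Hy) as [N HN].
    exists N. pose proof (HN (S N) ltac:(lia)) as HqN.
    rewrite Rabs_pos_eq in HqN by (left; apply pow_lt; lra).
    pose proof (Rmin_l (eta / 4) (1 / 2)). pose proof (Rmin_r (eta / 4) (1 / 2)).
    pose proof (pow_unit_interval q (S N) Hq).
    pose proof (asin_le_twice (q ^ S N) ltac:(lra)).
    unfold arc. rewrite Nat.add_0_l. nra.
  - rewrite (tail_succ q 0) by exact Hq.
    pose proof (gap_le q 0 Hq) as Hgap0. rewrite pow_O, Rmult_1_r in Hgap0.
    assert (Htail1 : tail q 1 <= arc q 1).
    { apply tail_le_telescope; [exact Hq| |].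
      - intros k Hk. apply gap_le_arc; assumption.
      - intros [|k] Hk; [lia|]. pose proof (pow_S_lt q k Hq).
        pose proof (pow_unit_interval q k Hq).
        apply Rmult_le_pos; [lra|apply asin_nonneg; lra]. }
    unfold arc in Htail1. rewrite pow_1 in Htail1. lra.
Qed.

(** * Convergence to the interval as q -> 1 *)

Lemma coord_range q x : 0 < q < 1 -> 0 <= coord q x <= tail q 0.
Proof.
  intros Hq. destruct x as [n|]; simpl.
  - split; [apply tail_bounds; exact Hq|apply tail_decreasing; [exact Hq|lia]].
  - pose proof (tail_bounds q 0 Hq). lra.
Qed.

(* When all gaps are at most [g], every point of [(0, d_q(1,0))] is within
   [g] of some [tail q n]: walk down the decreasing tails, which tend to 0. *)
Lemma tail_cover q g t : 0 < q < 1 -> (forall n, gap q n <= g) ->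
  0 < t -> t < tail q 0 -> exists n, Rabs (tail q n - t) <= g.
Proof.
  intros Hq Hg Ht HtL.
  assert (Hwalk : forall M, t <= tail q M \/ exists n, Rabs (tail q n - t) <= g).
  { induction M as [|M [HM|Hfound]]; [left; lra| |right; exact Hfound].
    destruct (Rle_dec t (tail q (S M))) as [HS|HS]; [left; exact HS|right].
    exists M. pose proof (tail_succ q M Hq). pose proof (Hg M).
    rewrite Rabs_pos_eq; lra. }
  destruct (tail_small q t Hq Ht) as [N HN].
  destruct (Hwalk N) as [HtN|Hfound]; [lra|exact Hfound].
Qed.

(* The image of [-pi/2, pi/2] in the line is [0, pi]. *)
Definition interval_coord (y : Ipt) : R := proj1_sig y + PI / 2.

Lemma interval_coord_isometry : isometric_embedding dI dR interval_coord.
Proof. intros x y. unfold dR, interval_coord, dI. f_equal. ring. Qed.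

Lemma GH_to_interval q c : 0 < q < 1 -> 0 < c ->
  (forall k, gap q k <= c) -> Rabs (tail q 0 - PI) <= c ->
  GH_lt (dq q) dI (2 * c).
Proof.
  intros Hq Hc Hgap HL. pose proof PI_RGT_0.
  set (L := tail q 0) in HL.
  assert (HLpi : PI - c <= L <= PI + c) by (unfold Rabs in HL; destruct (Rcase_abs _) in HL; lra).
  apply (GH_lt_via_line _ _ (coord q) interval_coord (2 * c) (3 * c / 2));
    [apply coord_isometry, Hq|apply interval_coord_isometry|lra| |].
  - intros x. pose proof (coord_range q x Hq) as Hx. fold L in Hx.
    unfold dR, interval_coord.
    destruct (Rle_dec (coord q x) PI) as [Hle|Hgt].
    + assert (Hy : - (PI / 2) <= coord q x - PI / 2 <= PI / 2) by lra.
      exists (exist (fun z => - (PI / 2) <= z <= PI / 2) _ Hy). simpl. replace (_ - _) with 0 by ring. rewrite Rabs_R0. lra.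
    + assert (Hy : - (PI / 2) <= PI / 2 <= PI / 2) by lra.
      exists (exist (fun z => - (PI / 2) <= z <= PI / 2) _ Hy). simpl. rewrite Rabs_pos_eq; lra.
  - intros [y Hy]. unfold dR, interval_coord. simpl.
    destruct (Rle_dec L (y + PI / 2)) as [Hbeyond|Hwithin].
    + exists (Some 0%nat). simpl. fold L. rewrite Rabs_left1; lra.
    + destruct (Req_dec (y + PI / 2) 0) as [Hzero|Hpos].
      * exists None. simpl. rewrite Hzero, Rminus_0_r, Rabs_R0. lra.
      * destruct (tail_cover q c (y + PI / 2) Hq Hgap ltac:(lra) ltac:(fold L; lra))
          as [n Hn].
        exists (Some n). simpl. lra.
Qed.

Lemma errors_near_one c : 0 < c -> exists delta, 0 < delta /\
  forall q, 0 < q < 1 -> 1 - delta < q ->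
    sqrt (1 - q ^ 2) <= c /\ PI - (1 + q) * asin q <= c.
Proof.
  intros Hc. pose proof PI_4. pose proof PI2_3_2.
  set (th := Rmin (c / 4) 1).
  assert (Hth : 0 < th <= c / 4 /\ th <= 1)
    by (unfold th; repeat split; [apply Rmin_pos; lra|apply Rmin_l|apply Rmin_r]).
  assert (Hcos : cos th < 1) by (rewrite <- cos_0; apply cos_decreasing_1; lra).
  set (delta := Rmin (Rmin (c / 4) (c * c / 2)) (1 - cos th)).
  assert (Hdelta : 0 < delta /\ delta <= c / 4 /\ delta <= c * c / 2 /\ delta <= 1 - cos th).
  { unfold delta. pose proof (Rmin_l (Rmin (c / 4) (c * c / 2)) (1 - cos th)).
    pose proof (Rmin_r (Rmin (c / 4) (c * c / 2)) (1 - cos th)).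
    pose proof (Rmin_l (c / 4) (c * c / 2)). pose proof (Rmin_r (c / 4) (c * c / 2)).
    repeat split; try lra. repeat apply Rmin_pos; nra. }
  exists delta. split; [lra|]. intros q Hq Hqd. split.
  - rewrite <- (sqrt_pow2 c) by lra. apply sqrt_le_1_alt. simpl. nra.
  - pose proof (asin_near_one th q ltac:(lra) ltac:(lra)).
    assert ((1 + q) * (PI / 2 - th) <= (1 + q) * asin q) by (apply Rmult_le_compat_l; lra).
    nra.
Qed.

Lemma GH_limit eps : 0 < eps -> exists delta, 0 < delta /\
  forall q, 0 < q < 1 -> 1 - delta < q -> GH_lt (dq q) dI eps.
Proof.
  intros Heps.
  destruct (errors_near_one (eps / 2) ltac:(lra)) as [delta [Hdelta Herr]].
  exists delta. split; [exact Hdelta|]. intros q Hq Hqd.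
  destruct (Herr q Hq Hqd) as [Hsq Harc].
  assert (Hgap : forall k, gap q k <= eps / 2).
  { intros k. pose proof (gap_le q k Hq). pose proof (pow_unit_interval q k Hq).
    pose proof (sqrt_pos (1 - q ^ 2)). nra. }
  assert (Harc_le : (1 + q) * asin q <= PI).
  { pose proof (asin_bound q). pose proof (asin_nonneg q ltac:(lra)). nra. }
  pose proof (length_bounds q Hq).
  replace eps with (2 * (eps / 2)) by field.
  apply GH_to_interval; [exact Hq|lra|exact Hgap|].
  apply Rabs_le. lra.
Qed.

Theorem theoremB :
  (* continuity of q |-> (X_q, d_q) on (0,1) w.r.t. GH distance *)
  (forall q0 : R, 0 < q0 < 1 ->
     forall eps : R, 0 < eps ->
       exists delta : R, 0 < delta /\
         forall q : R, 0 < q < 1 -> Rabs (q - q0) < delta ->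
           GH_lt (dq q) (dq q0) eps) /\
  (* GH convergence to [-pi/2, pi/2] as q -> 1^- *)
  (forall eps : R, 0 < eps ->
     exists delta : R, 0 < delta /\
       forall q : R, 0 < q < 1 -> 1 - delta < q ->
         GH_lt (dq q) dI eps).
Proof.
  split.
  - exact GH_continuity.
  - exact GH_limit.
Qed.
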